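(* Let $P$ and $Q$ be persistence diagrams, i.e. finite multisets of points in $\mathbb{R}^2$. Let $\pi:\mathbb{R}^2\to L$ be the projection onto the diagonal $L=\{(x,x)\mid x\in\mathbb{R}\}$, $\pi(p)=\big(\tfrac{p.x+p.y}{2},\tfrac{p.x+p.y}{2}\big)$, and set $\widehat P = P\cup\pi(Q)$ and $\widehat Q = Q\cup \pi(P)$ (as multisets). Let $\mu_{\widehat P}$ and $\nu_{\widehat Q}$ be the discrete measures induced by $\widehat P$ and $\widehat Q$ (each point carrying mass equal to its multiplicity). Then $$d_{OT}(\mu_{\widehat P},\nu_{\widehat Q}) \le 2\, d_W(P,Q).$$
   Context: For two discrete measures $\mu,\nu$ on a finite set $X\subset\mathbb{R}^2$ with equal total mass, $d_{OT}(\mu,\nu)=\min_{\tau}\sum_{x,y\in X}\tau(x,y)\|x-y\|_2$, where $\tau$ ranges over nonnegative measures on $X\times X$ whose two marginals are $\mu$ and $\nu$. For finite multisets $A,B\subset\mathbb{R}^2$, an augmented matching is a subset $\Gamma\subset (A\cup\pi(B))\times(B\cup\pi(A))$ such that each element of $A$ and of $B$ (counted with multiplicity) appears in exactly one pair of $\Gamma$, and every pair $(a,b)\in\Gamma$ has one of the forms: (1) $a\in A,b\in B$; (2) $a\in A$, $b=\pi(a)$; (3) $a=\pi(b)$, $b\in B$. The 1-Wasserstein distance between persistence diagrams is $d_W(P,Q)=\min_\Gamma\sum_{(p,q)\in\Gamma}\|p-q\|_2$, the minimum over all augmented matchings $\Gamma$ for $P$ and $Q$. *)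

From HB Require Import structures.
From mathcomp Require Import all_boot all_order all_algebra.
From mathcomp Require Import boolp classical_sets reals.
Set Implicit Arguments. Unset Strict Implicit. Unset Printing Implicit Defensive.
Import Order.TTheory GRing.Theory Num.Theory.
Local Open Scope ring_scope.
Local Open Scope classical_set_scope.

Section PD.
Variable R : realType.
Notation pt := (R * R)%type.

Definition dist2 (p q : pt) : R := Num.sqrt ((p.1 - q.1) ^+ 2 + (p.2 - q.2) ^+ 2).

Definition diagproj (p : pt) : pt := ((p.1 + p.2) / 2, (p.1 + p.2) / 2).

(* A persistence diagram is a finite multiset of points, represented by a
   sequence; its elements (counted with multiplicity) are its positions.
   A pair of an augmented matching is tagged by its kind:
     inl (inl (i, j))  : (P_i, Q_j)            (type 1)
     inl (inr i)       : (P_i, pi(P_i))        (type 2)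
     inr j             : (pi(Q_j), Q_j)        (type 3)                    *)
Definition mtag (m n : nat) := ((('I_m * 'I_n) + 'I_m) + 'I_n)%type.

Definition tagP m n (i : 'I_m) (g : mtag m n) : bool :=
  match g with
  | inl (inl (i', _)) => i' == i
  | inl (inr i') => i' == i
  | inr _ => false
  end.

Definition tagQ m n (j : 'I_n) (g : mtag m n) : bool :=
  match g with
  | inl (inl (_, j')) => j' == j
  | inl (inr _) => false
  | inr j' => j' == j
  end.

Definition aug_matching (P Q : seq pt) (G : {set mtag (size P) (size Q)}) : Prop :=
  (forall i : 'I_(size P), #|[set g in G | tagP i g]| = 1%N) /\
  (forall j : 'I_(size Q), #|[set g in G | tagQ j g]| = 1%N).

Definition tag_cost (P Q : seq pt) (g : mtag (size P) (size Q)) : R :=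
  match g with
  | inl (inl (i, j)) => dist2 (nth (0, 0) P i) (nth (0, 0) Q j)
  | inl (inr i) => dist2 (nth (0, 0) P i) (diagproj (nth (0, 0) P i))
  | inr j => dist2 (diagproj (nth (0, 0) Q j)) (nth (0, 0) Q j)
  end.

Definition matching_cost (P Q : seq pt) (G : {set mtag (size P) (size Q)}) : R :=
  \sum_(g in G) tag_cost g.

(* d_W(P,Q) = min over augmented matchings (written as inf; it is attained) *)
Definition dW (P Q : seq pt) : R :=
  inf [set c | exists G : {set mtag (size P) (size Q)},
      aug_matching G /\ c = matching_cost G].

(* X is a finite set of points given by a duplicate-free sequence;
   measures on X are given by their mass functions mu, nu : pt -> R.       *)
Definition transport_plan (X : seq pt) (mu nu : pt -> R)
    (tau : 'I_(size X) -> 'I_(size X) -> R) : Prop :=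
  [/\ forall a b, 0 <= tau a b,
      forall a, \sum_b tau a b = mu (nth (0, 0) X a)
    & forall b, \sum_a tau a b = nu (nth (0, 0) X b)].

Definition plan_cost (X : seq pt) (tau : 'I_(size X) -> 'I_(size X) -> R) : R :=
  \sum_a \sum_b tau a b * dist2 (nth (0, 0) X a) (nth (0, 0) X b).

Definition dOT (X : seq pt) (mu nu : pt -> R) : R :=
  inf [set c | exists tau : 'I_(size X) -> 'I_(size X) -> R,
      @transport_plan X mu nu tau /\ c = @plan_cost X tau].

Definition mset_measure (s : seq pt) (x : pt) : R := (count_mem x s)%:R.

Definition hatP (P Q : seq pt) : seq pt := P ++ map diagproj Q.

End PD.

From HB Require Import structures.
From mathcomp Require Import all_boot all_order all_algebra.
From mathcomp Require Import boolp classical_sets reals.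
From mathcomp Require Import ring lra.
Import Order.TTheory GRing.Theory Num.Theory.
Local Open Scope ring_scope.

(* Every augmented matching G yields a transport plan of cost at most
   2 cost(G): a pair (p, q) of P x Q ships p to q and pi(q) to pi(p), which
   costs at most 2 |p - q| because pi is 1-Lipschitz, and a pair (p, pi(p))
   ships p to pi(p) alone.  Sources and targets of these moves enumerate
   exactly P + pi(Q) and Q + pi(P), since each point of P and of Q lies in
   exactly one pair of G. *)

Lemma count_sum (T : Type) (a : pred T) (s : seq T) :
  count a s = \sum_(x <- s) (a x : nat).
Proof. by elim: s => [|x s IH]; rewrite ?big_nil ?big_cons //= IH. Qed.

Lemma sum_nth_ord {V : nmodType} {T : Type} (x0 : T) (s : seq T) (F : T -> V) :
  \sum_(i < size s) F (nth x0 s i) = \sum_(x <- s) F x.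
Proof. by rewrite (big_nth x0) big_mkord. Qed.

Lemma sum_nth_indicator {R : pzSemiRingType} {T : eqType} (x0 : T) (s : seq T)
    (x : T) (F : T -> R) :
  uniq s -> x \in s ->
  \sum_(i < size s) (x == nth x0 s i)%:R * F (nth x0 s i) = F x.
Proof.
move=> s_uniq s_x; rewrite (sum_nth_ord x0 _ (fun y => (x == y)%:R * F y)).
rewrite (bigD1_seq x) //= eqxx mul1r big1 ?addr0 // => y.
by rewrite eq_sym => /negPf ->; rewrite mul0r.
Qed.

Lemma sum_unique_incidence (I T : finType) (V : nmodType) (G : {set T})
    (r : I -> pred T) (F : I -> V) :
  (forall i, #|[set g in G | r i g]| = 1%N) ->
  \sum_(g in G) \sum_(i | r i g) F i = \sum_i F i.
Proof.
move=> unique_r; rewrite (exchange_big_dep predT) //=.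
apply: eq_bigr => i _; rewrite sumr_const -[RHS]mulr1n -(unique_r i).
by congr (_ *+ _); apply: eq_card => g; rewrite inE.
Qed.

Section Plane.
Variable R : realType.
Notation pt := (R * R)%type.

Lemma dist2_ge0 (p q : pt) : 0 <= dist2 p q.
Proof. exact: sqrtr_ge0. Qed.

Lemma dist2C (p q : pt) : dist2 p q = dist2 q p.
Proof. by rewrite /dist2 -!(sqrrN (p.1 - _)) -!(sqrrN (p.2 - _)) !opprB. Qed.

Lemma dist2_diagproj (p q : pt) : dist2 (diagproj p) (diagproj q) <= dist2 p q.
Proof.
rewrite /dist2 /diagproj /= ler_sqrt ?addr_ge0 ?sqr_ge0 //.
set u := p.1 - q.1; set v := p.2 - q.2.
have -> : ((p.1 + p.2) / 2 - (q.1 + q.2) / 2) = (u + v) / 2.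
  by rewrite /u /v; field.
have := sqr_ge0 (u - v); nra.
Qed.

Lemma perm_mset_measure (s1 s2 : seq pt) :
  perm_eq s1 s2 -> mset_measure s1 = mset_measure s2 :> (pt -> R).
Proof. by move=> /permP s12; apply/funext => x; rewrite /mset_measure s12. Qed.

Lemma plan_cost_ge0 (X : seq pt) (tau : 'I_(size X) -> 'I_(size X) -> R) :
  (forall a b, 0 <= tau a b) -> 0 <= plan_cost tau.
Proof.
move=> tau_ge0; apply: sumr_ge0 => a _; apply: sumr_ge0 => b _.
exact: mulr_ge0 (tau_ge0 a b) (dist2_ge0 _ _).
Qed.

Lemma dOT_le_plan_cost (X : seq pt) (mu nu : pt -> R) tau :
  @transport_plan R X mu nu tau -> dOT X mu nu <= plan_cost tau.
Proof.
move=> tau_plan; apply: ge_inf; last by exists tau.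
by exists 0 => _ [sigma [[sigma_ge0 _ _] ->]]; exact: plan_cost_ge0.
Qed.

Section MovesPlan.
Variables (X : seq pt) (s : seq (pt * pt)).
Hypothesis X_uniq : uniq X.
Hypothesis sources_in_X : {subset map fst s <= X}.
Hypothesis targets_in_X : {subset map snd s <= X}.
Notation pX a := (nth (0, 0) X a).

Definition moves_plan (a b : 'I_(size X)) : R :=
  \sum_(st <- s) (st.1 == pX a)%:R * (st.2 == pX b)%:R.

Lemma moves_plan_ge0 a b : 0 <= moves_plan a b.
Proof. by apply: sumr_ge0 => st _; rewrite mulr_ge0 ?ler0n. Qed.

Lemma moves_plan_row a :
  \sum_b moves_plan a b = mset_measure (map fst s) (pX a).
Proof.
rewrite exchange_big /= /mset_measure count_sum natr_sum big_map.
apply: eq_big_seq => st s_st; rewrite -big_distrr /=.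
under eq_bigr => b _ do rewrite -[(st.2 == _)%:R]mulr1.
by rewrite (sum_nth_indicator _ X st.2 (fun=> 1)) ?targets_in_X ?map_f // mulr1.
Qed.

Lemma moves_plan_col b :
  \sum_a moves_plan a b = mset_measure (map snd s) (pX b).
Proof.
rewrite exchange_big /= /mset_measure count_sum natr_sum big_map.
apply: eq_big_seq => st s_st; rewrite -big_distrl /=.
under eq_bigr => a _ do rewrite -[(st.1 == _)%:R]mulr1.
by rewrite (sum_nth_indicator _ X st.1 (fun=> 1)) ?sources_in_X ?map_f // mul1r.
Qed.

Lemma moves_plan_cost :
  plan_cost moves_plan = \sum_(st <- s) dist2 st.1 st.2.
Proof.
rewrite /plan_cost.
under eq_bigr do under eq_bigr do rewrite big_distrl /=.
under eq_bigr do rewrite exchange_big /=.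
rewrite exchange_big /=; apply: eq_big_seq => st s_st.
under eq_bigr do under eq_bigr do rewrite -mulrA.
under eq_bigr do rewrite -big_distrr /= sum_nth_indicator ?targets_in_X ?map_f //.
rewrite (sum_nth_indicator _ X st.1 (fun x => dist2 x st.2)) //.
by rewrite sources_in_X ?map_f.
Qed.

Lemma dOT_le_moves_cost (A B : seq pt) :
  perm_eq (map fst s) A -> perm_eq (map snd s) B ->
  dOT X (mset_measure A) (mset_measure B) <= \sum_(st <- s) dist2 st.1 st.2.
Proof.
move=> /perm_mset_measure <- /perm_mset_measure <-; rewrite -moves_plan_cost.
apply: dOT_le_plan_cost; split;
  [exact: moves_plan_ge0 | exact: moves_plan_row | exact: moves_plan_col].
Qed.

End MovesPlan.

Section MatchingMoves.
Variables P Q : seq pt.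
Notation m := (size P).
Notation n := (size Q).
Notation pP i := (nth (0, 0) P i).
Notation pQ j := (nth (0, 0) Q j).

Definition moves (g : mtag m n) : seq (pt * pt) :=
  match g with
  | inl (inl (i, j)) => [:: (pP i, pQ j); (diagproj (pQ j), diagproj (pP i))]
  | inl (inr i) => [:: (pP i, diagproj (pP i))]
  | inr j => [:: (diagproj (pQ j), pQ j)]
  end.

Definition matching_moves (G : {set mtag m n}) : seq (pt * pt) :=
  flatten [seq moves g | g <- enum G].

Lemma big_matching_moves (V : nmodType) G (F : pt * pt -> V) :
  \sum_(st <- matching_moves G) F st = \sum_(g in G) \sum_(st <- moves g) F st.
Proof. by rewrite big_flatten big_map big_enum. Qed.

Lemma sum_moves_sources (V : nmodType) g (F : pt -> V) :
  \sum_(st <- moves g) F st.1 =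
  \sum_(i | tagP i g) F (pP i) + \sum_(j | tagQ j g) F (diagproj (pQ j)).
Proof.
case: g => [[[i j]|i]|j]; rewrite !big_cons big_nil /=.
- by rewrite !(big_pred1 i) ?(big_pred1 j) ?addr0 // => k; rewrite /= eq_sym.
- by rewrite (big_pred1 i) ?big_pred0 ?addr0 // => k; rewrite /= eq_sym.
- by rewrite (big_pred1 j) ?big_pred0 ?add0r ?addr0 // => k; rewrite /= eq_sym.
Qed.

Lemma sum_moves_targets (V : nmodType) g (F : pt -> V) :
  \sum_(st <- moves g) F st.2 =
  \sum_(j | tagQ j g) F (pQ j) + \sum_(i | tagP i g) F (diagproj (pP i)).
Proof.
case: g => [[[i j]|i]|j]; rewrite !big_cons big_nil /=.
- by rewrite !(big_pred1 i) ?(big_pred1 j) ?addr0 // => k; rewrite /= eq_sym.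
- by rewrite (big_pred1 i) ?big_pred0 ?add0r ?addr0 // => k; rewrite /= eq_sym.
- by rewrite (big_pred1 j) ?big_pred0 ?addr0 // => k; rewrite /= eq_sym.
Qed.

Lemma sum_hatP (V : nmodType) (A B : seq pt) (F : pt -> V) :
  \sum_(x <- hatP A B) F x =
  \sum_(i < size A) F (nth (0, 0) A i) +
  \sum_(j < size B) F (diagproj (nth (0, 0) B j)).
Proof.
rewrite big_cat big_map /= (sum_nth_ord (0, 0) A).
by rewrite (sum_nth_ord (0, 0) B (F \o @diagproj R)).
Qed.

Variable G : {set mtag m n}.
Hypothesis G_matching : aug_matching G.

Lemma matching_moves_sources : perm_eq (map fst (matching_moves G)) (hatP P Q).
Proof.
have [unique_P unique_Q] := G_matching.
apply/permP => a; rewrite !count_sum big_map big_matching_moves sum_hatP.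
under eq_bigr do rewrite (sum_moves_sources _ _ (nat_of_bool \o a)).
by rewrite big_split /= !sum_unique_incidence.
Qed.

Lemma matching_moves_targets : perm_eq (map snd (matching_moves G)) (hatP Q P).
Proof.
have [unique_P unique_Q] := G_matching.
apply/permP => a; rewrite !count_sum big_map big_matching_moves sum_hatP.
under eq_bigr do rewrite (sum_moves_targets _ _ (nat_of_bool \o a)).
by rewrite big_split /= !sum_unique_incidence.
Qed.

Lemma moves_cost g : \sum_(st <- moves g) dist2 st.1 st.2 <= 2 * tag_cost g.
Proof.
case: g => [[[i j]|i]|j]; rewrite !big_cons big_nil /= addr0.
- have := dist2_diagproj (pP i) (pQ j); rewrite dist2C; lra.
- have := dist2_ge0 (pP i) (diagproj (pP i)); lra.
- have := dist2_ge0 (diagproj (pQ j)) (pQ j); lra.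
Qed.

Lemma matching_moves_cost :
  \sum_(st <- matching_moves G) dist2 st.1 st.2 <= 2 * matching_cost G.
Proof.
rewrite big_matching_moves /matching_cost big_distrr /=.
by apply: ler_sum => g _; exact: moves_cost.
Qed.

Lemma dOT_le_matching_cost :
  dOT (undup (hatP P Q ++ hatP Q P))
      (mset_measure (hatP P Q)) (mset_measure (hatP Q P))
  <= 2 * matching_cost G.
Proof.
apply: le_trans matching_moves_cost.
apply: dOT_le_moves_cost matching_moves_sources matching_moves_targets.
- exact: undup_uniq.
- move=> x; rewrite (perm_mem matching_moves_sources) mem_undup => Px.
  by rewrite mem_cat Px.
- move=> x; rewrite (perm_mem matching_moves_targets) mem_undup => Qx.
  by rewrite mem_cat Qx orbT.
Qed.

End MatchingMoves.

Definition diagonal_matching (P Q : seq pt) : {set mtag (size P) (size Q)} :=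
  [set g | if g is inl (inl _) then false else true].

Lemma diagonal_matching_aug (P Q : seq pt) : aug_matching (diagonal_matching P Q).
Proof.
split=> [i|j].
- rewrite (_ : [set g in _ | _] = [set inl (inr i)]) ?cards1 //.
  by apply/setP => -[[[i' j']|i']|j']; rewrite !inE.
- rewrite (_ : [set g in _ | _] = [set inr j]) ?cards1 //.
  by apply/setP => -[[[i' j']|i']|j']; rewrite !inE.
Qed.

End Plane.

Theorem mainTheorem1 (R : realType) (P Q : seq (R * R)) :
  dOT (undup (hatP P Q ++ hatP Q P))
      (mset_measure (hatP P Q)) (mset_measure (hatP Q P))
  <= 2 * dW P Q.
Proof.
rewrite -ler_pdivrMl //; apply: lb_le_inf.
  by exists (matching_cost (diagonal_matching _ P Q)), (diagonal_matching _ P Q);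
    split; first exact: diagonal_matching_aug.
move=> _ [G [G_matching ->]]; rewrite ler_pdivrMl //.
exact: dOT_le_matching_cost.
Qed.
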